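(* For any $\mathbf{p},\mathbf{q}\in\mathbb{R}_{\ge0}^{G_\Delta}$ with $\|\mathbf{p}\|_1=\|\mathbf{q}\|_1$ and any $\sigma>0$, $\mathrm{EMD}(\tilde H^\sigma_{\mathbf{p}},\tilde H^\sigma_{\mathbf{q}})\le\mathrm{EMD}(\mathbf{p},\mathbf{q})$.
   Context: $G_\Delta=\{(i/\Delta,j/\Delta):i,j\in\{0,\dots,\Delta-1\}\}$ and $\tilde G_\Delta=\{(i/\Delta,j/\Delta):i,j\in\mathbb{Z}\}$. For $\mathbf{p}\in\mathbb{R}_{\ge0}^{G_\Delta}$ the infinite heatmap is $\tilde H^\sigma_{\mathbf{p}}(a)=\sum_{a'\in G_\Delta}\frac1Z e^{-\|a-a'\|_2^2/(2\sigma^2)}\mathbf{p}(a')$ for $a\in\tilde G_\Delta$, where $Z=\sum_{d\in\tilde G_\Delta}e^{-\|d\|_2^2/(2\sigma^2)}$. For nonnegative $\mu,\nu$ on a set of points in $\mathbb{R}^2$ with equal total mass, $\mathrm{EMD}(\mu,\nu)=\inf_\gamma\sum_{x,y}\gamma(x,y)\|x-y\|_1$ over nonnegative $\gamma$ with marginals $\mu$ and $\nu$. *)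

From HB Require Import structures.
From mathcomp Require Import all_boot all_order all_algebra.
From mathcomp Require Import all_classical all_reals all_analysis.
Unset Printing Implicit Defensive.
Import Order.TTheory GRing.Theory Num.Theory.
Local Open Scope classical_set_scope.
Local Open Scope ring_scope.

Section Defs.
Variable R : realType.

Definition l1dist (x y : R * R) : R := `|x.1 - y.1| + `|x.2 - y.2|.
Definition sqdist (x y : R * R) : R := (x.1 - y.1) ^+ 2 + (x.2 - y.2) ^+ 2.

Definition couplings (T : choiceType) (mu nu : T -> \bar R) : set (T * T -> \bar R) :=
  [set g | (forall z, (0 <= g z)%E) /\
           (forall x, \esum_(y in [set: T]) g (x, y) = mu x) /\
           (forall y, \esum_(x in [set: T]) g (x, y) = nu y)].

Definition EMD (T : choiceType) (pos : T -> R * R) (mu nu : T -> \bar R) : \bar R :=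
  ereal_inf [set \esum_(z in [set: T * T]) (g z * (l1dist (pos z.1) (pos z.2))%:E)%E
            | g in couplings T mu nu].

(* The finite grid G_Delta, indexed by 'I_Delta * 'I_Delta, and the
   infinite grid ~G_Delta, indexed by int * int. *)
Definition Gpos (Delta : nat) (a : 'I_Delta * 'I_Delta) : R * R :=
  ((a.1 : nat)%:R / Delta%:R, (a.2 : nat)%:R / Delta%:R).
Definition Zpos (Delta : nat) (a : int * int) : R * R :=
  (a.1%:~R / Delta%:R, a.2%:~R / Delta%:R).

Definition Znorm (Delta : nat) (sigma : R) : R :=
  fine (\esum_(d in [set: int * int])
          (expR (- sqdist (Zpos Delta d) (0, 0) / (2 * sigma ^+ 2)))%:E).

Definition heatmap (Delta : nat) (sigma : R) (p : 'I_Delta * 'I_Delta -> R)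
    (a : int * int) : R :=
  \sum_(a' : 'I_Delta * 'I_Delta)
     (Znorm Delta sigma)^-1 *
     expR (- sqdist (Zpos Delta a) (Gpos Delta a') / (2 * sigma ^+ 2)) * p a'.
End Defs.
Arguments l1dist {R}.
Arguments sqdist {R}.
Arguments couplings {R T}.
Arguments EMD {R T}.
Arguments Gpos {R}.
Arguments Zpos {R}.
Arguments Znorm {R}.
Arguments heatmap {R Delta}.

From HB Require Import structures.
From mathcomp Require Import all_boot all_order all_algebra.
From mathcomp Require Import all_classical all_reals all_analysis.
Import Order.TTheory GRing.Theory Num.Theory.
Local Open Scope classical_set_scope.
Local Open Scope ring_scope.

(* Move heat rigidly.  If a plan for (p, q) sends mass g(x, y) from x to y,
   send the bump g(x, y) K(., x) around x to the bump g(x, y) K(., y) around y,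
   each point a going to a + (y - x).  Since K is translation invariant the
   marginals of this plan on the infinite grid are the two heatmaps, every unit
   of heat travels exactly |x - y|_1, and K(., x) has total mass at most 1, so
   the cost does not increase. *)

Lemma big_pairE (S : Type) (idx : S) (op : Monoid.com_law idx) (I J : finType)
    (F : I * J -> S) :
  \big[op/idx]_(w : I * J) F w = \big[op/idx]_(i : I) \big[op/idx]_(j : J) F (i, j).
Proof. by rewrite pair_bigA; apply: eq_bigr => -[]. Qed.

Section esum_facts.
Context {R : realType}.
Local Open Scope ereal_scope.

Lemma esum_finType (T : finType) (f : T -> \bar R) :
  (forall i, 0 <= f i) -> \esum_(i in [set: T]) f i = \sum_(i : T) f i.
Proof.
move=> f0; rewrite esum_fset //; last exact: finite_finset.
rewrite (fsbigE (enum T)) ?enum_uniq //; last by move=> i _; rewrite mem_enum.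
by rewrite big_enum_cond; apply: eq_bigl => i; rewrite in_setT.
Qed.

Lemma esum_pred1 {T : choiceType} (c : T) (v : \bar R) :
  0 <= v -> \esum_(i in [set: T]) (if i == c then v else 0) = v.
Proof.
move=> v0; rewrite -[RHS](esum_set1 (a := fun=> v) (t := c) v0) [RHS]esum_mkcond.
by apply: eq_esum => i _; rewrite in_set1.
Qed.

Lemma esumZl_le (T : choiceType) (r : \bar R) (f : T -> \bar R) :
  0 <= r -> (forall i, 0 <= f i) ->
  \esum_(i in [set: T]) r * f i <= r * \esum_(i in [set: T]) f i.
Proof.
move=> r0 f0; apply: ge_ereal_sup => _ [X [finX _] <-] /=.
rewrite fsbig_finite //= -ge0_sume_distrr; last by move=> i _; exact: f0.
rewrite lee_wpmul2l // -fsbig_finite //.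
by apply: ereal_sup_ubound; exists X.
Qed.

End esum_facts.

Lemma EMD_le_of_couplings (R : realType) (T T' : choiceType)
    (pos : T -> R * R) (pos' : T' -> R * R)
    (mu nu : T -> \bar R) (mu' nu' : T' -> \bar R) :
    (forall g, couplings mu nu g -> exists2 g', couplings mu' nu' g' &
       (\esum_(z in [set: T' * T']) g' z * (l1dist (pos' z.1) (pos' z.2))%:E
        <= \esum_(z in [set: T * T]) g z * (l1dist (pos z.1) (pos z.2))%:E)%E) ->
  (EMD pos' mu' nu' <= EMD pos mu nu)%E.
Proof.
move=> lift; apply: le_ereal_inf_tmp => _ [g /lift[g' g'_coupling g'_cost] <-].
by apply: le_trans g'_cost; apply: ereal_inf_lbound; exists g'.
Qed.

Section translation_invariant_smoothing.
Context {R : realType} {V : zmodType} {T : finType}.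
Variable e : T -> V.
Variable k : V -> V -> R.
Hypothesis k_ge0 : forall a b, 0 <= k a b.
Hypothesis kD : forall a b d, k (a + d) (b + d) = k a b.
Local Open Scope ereal_scope.

Definition smooth (mu : T -> \bar R) (a : V) : \bar R :=
  \sum_(x : T) (k a (e x))%:E * mu x.

Definition lift_coupling (g : T * T -> \bar R) (a b : V) : \bar R :=
  \sum_(w : T * T)
    if b == (a + (e w.2 - e w.1))%R then (k a (e w.1))%:E * g w else 0.

Section lift.
Variable g : T * T -> \bar R.
Hypothesis g_ge0 : forall w, 0 <= g w.

Let kg_ge0 a w : 0 <= (k a (e w.1))%:E * g w.
Proof. by rewrite mule_ge0 ?lee_fin. Qed.

Let lift_term_ge0 a b w :
  0 <= if b == (a + (e w.2 - e w.1))%R then (k a (e w.1))%:E * g w else 0.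
Proof. by case: ifP. Qed.

Lemma lift_coupling_ge0 a b : 0 <= lift_coupling g a b.
Proof. exact: sume_ge0. Qed.

Lemma lift_coupling_marginal1 (mu : T -> \bar R) (a : V) :
    (forall x, \esum_(y in [set: T]) g (x, y) = mu x) ->
  \esum_(b in [set: V]) lift_coupling g a b = smooth mu a.
Proof.
move=> g_mu; rewrite esum_sum; last by move=> b w _ _; exact: lift_term_ge0.
rewrite big_pairE; apply: eq_bigr => x _; rewrite -g_mu esum_finType //.
rewrite ge0_sume_distrr //; apply: eq_bigr => y _.
by rewrite esum_pred1 // (kg_ge0 a (x, y)).
Qed.

Lemma lift_coupling_marginal2 (nu : T -> \bar R) (b : V) :
    (forall y, \esum_(x in [set: T]) g (x, y) = nu y) ->
  \esum_(a in [set: V]) lift_coupling g a b = smooth nu b.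
Proof.
move=> g_nu; rewrite esum_sum; last by move=> a w _ _; exact: lift_term_ge0.
rewrite big_pairE exchange_big; apply: eq_bigr => y _.
rewrite -g_nu esum_finType //.
rewrite ge0_sume_distrr //; apply: eq_bigr => x _ /=; set d := (e y - e x)%R.
have -> : k b (e y) = k (b - d)%R (e x) by rewrite -(kD (b - d)%R _ d) subrK subrKC.
rewrite -[RHS](esum_pred1 (b - d)%R) ?(kg_ge0 _ (x, y)) //; apply: eq_esum => a _.
by rewrite -subr_eq [a == _]eq_sym; case: eqP => // <-.
Qed.

Section cost.
Variable c : V -> V -> R.
Hypothesis c_ge0 : forall a b, (0 <= c a b)%R.
Hypothesis cD : forall a b d, c (a + d)%R (b + d)%R = c a b.
Hypothesis k_mass : forall b, \esum_(a in [set: V]) (k a b)%:E <= 1.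

Let lift_term_cost_le (w : T * T) :
  \esum_(z in [set: V * V])
     (if z.2 == (z.1 + (e w.2 - e w.1))%R then (k z.1 (e w.1))%:E * g w else 0)
       * (c z.1 z.2)%:E
  <= g w * (c (e w.1) (e w.2))%:E.
Proof.
case: w => x y /=; set d := (e y - e x)%R; set C := g (x, y) * (c (e x) (e y))%:E.
have C_ge0 : 0 <= C by rewrite mule_ge0 ?lee_fin.
have -> : [set: V * V] = [set: V] `*`` (fun=> [set: V]) by rewrite -setXTT.
rewrite -(esum_esum (a := fun a b =>
    (if b == (a + d)%R then (k a (e x))%:E * g (x, y) else 0) * (c a b)%:E));
  last first.
  move=> a b _ _; rewrite mule_ge0 ?lee_fin //; exact: (lift_term_ge0 a b (x, y)).
rewrite (eq_esum (b := fun a => (k a (e x))%:E * C)); last first.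
  move=> a _; have c_shift : c a (a + d)%R = c (e x) (e y).
    by rewrite -(cD (e x) (e y) (a - e x)%R) subrKC addrCA.
  rewrite -[RHS](esum_pred1 (a + d)%R) ?mule_ge0 ?lee_fin //.
  apply: eq_esum => b _; case: eqP => [->|_]; last by rewrite mul0e.
  by rewrite c_shift -muleA.
rewrite (eq_esum (b := fun a => C * (k a (e x))%:E)); last first.
  by move=> a _; rewrite muleC.
apply: le_trans; first by apply: esumZl_le => // a; exact: k_ge0.
by rewrite -[leRHS]mule1 lee_wpmul2l.
Qed.

Lemma lift_coupling_cost_le :
  \esum_(z in [set: V * V]) lift_coupling g z.1 z.2 * (c z.1 z.2)%:E
  <= \esum_(w in [set: T * T]) g w * (c (e w.1) (e w.2))%:E.
Proof.
rewrite esum_finType; last by move=> w; rewrite mule_ge0 ?lee_fin.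
under eq_esum => z _.
  rewrite ge0_sume_distrl; last by move=> w _; exact: lift_term_ge0.
  over.
rewrite esum_sum; last first.
  by move=> z w _ _; rewrite mule_ge0 ?lee_fin ?lift_term_ge0.
by apply: lee_sum => w _; exact: lift_term_cost_le.
Qed.

End cost.
End lift.

Lemma lift_couplings (mu nu : T -> \bar R) (g : T * T -> \bar R) :
  couplings mu nu g ->
  couplings (smooth mu) (smooth nu) (fun z => lift_coupling g z.1 z.2).
Proof.
move=> [g_ge0 [g_mu g_nu]]; split; [|split].
- by move=> z; exact: lift_coupling_ge0.
- by move=> a; exact: lift_coupling_marginal1.
- by move=> b; exact: lift_coupling_marginal2.
Qed.

Lemma EMD_smooth_le (pos : V -> R * R) (mu nu : T -> \bar R) :
    (forall a b d,
       l1dist (pos (a + d)%R) (pos (b + d)%R) = l1dist (pos a) (pos b)) ->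
    (forall b, \esum_(a in [set: V]) (k a b)%:E <= 1) ->
  EMD pos (smooth mu) (smooth nu) <= EMD (fun x => pos (e x)) mu nu.
Proof.
move=> posD k_mass; apply: EMD_le_of_couplings => g g_coupling.
exists (fun z => lift_coupling g z.1 z.2); first exact: lift_couplings.
have [g_ge0 _] := g_coupling.
have l1dist_ge0 a b : (0 <= l1dist (pos a) (pos b))%R by rewrite addr_ge0.
exact: (lift_coupling_cost_le _ g_ge0 _ l1dist_ge0 posD k_mass).
Qed.

End translation_invariant_smoothing.

Section plane.
Variable R : realType.
Implicit Types x y z : R * R.

Lemma l1distDr x y z : l1dist (x + z) (y + z) = l1dist x y.
Proof. by rewrite /l1dist /= (addrC y.1) (addrC y.2) !addrKA. Qed.

Lemma sqdistDr x y z : sqdist (x + z) (y + z) = sqdist x y.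
Proof. by rewrite /sqdist /= (addrC y.1) (addrC y.2) !addrKA. Qed.

Lemma ZposD (Delta : nat) (a b : int * int) :
  Zpos Delta (a + b) = Zpos Delta a + Zpos Delta b :> R * R.
Proof. by rewrite /Zpos /= !intrD !mulrDl. Qed.

End plane.

Section gaussian_kernel.
Variables (R : realType) (Delta : nat) (sigma : R).

Definition grid_embed (x : 'I_Delta * 'I_Delta) : int * int :=
  ((x.1 : nat)%:Z, (x.2 : nat)%:Z).

Definition gauss_kernel (a b : int * int) : R :=
  (Znorm Delta sigma)^-1 *
  expR (- sqdist (Zpos Delta a) (Zpos Delta b) / (2 * sigma ^+ 2)).

Lemma Znorm_ge0 : 0 <= Znorm Delta sigma.
Proof. by apply: fine_ge0; apply: esum_ge0 => d _; rewrite lee_fin expR_ge0. Qed.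

Lemma gauss_kernel_ge0 a b : 0 <= gauss_kernel a b.
Proof. by rewrite mulr_ge0 ?invr_ge0 ?Znorm_ge0 ?expR_ge0. Qed.

Lemma gauss_kernelD a b d : gauss_kernel (a + d) (b + d) = gauss_kernel a b.
Proof. by rewrite /gauss_kernel !ZposD sqdistDr. Qed.

Lemma esum_gauss_kernel_le1 b :
  (\esum_(a in [set: int * int]) (gauss_kernel a b)%:E <= 1)%E.
Proof.
rewrite (reindex_esum [set: int * int] _ (fun d => d + b)); last first.
  by rewrite setTT_bijective; exists (fun a => a - b) => d; rewrite ?addrK ?subrK.
have Zpos0 : Zpos Delta 0 = (0, 0) :> R * R by rewrite /Zpos /= !mul0r.
under eq_esum => d _ do rewrite -{2}(add0r b) gauss_kernelD /gauss_kernel Zpos0 EFinM.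
apply: le_trans; first by apply: esumZl_le => [|d];
  rewrite lee_fin ?invr_ge0 ?Znorm_ge0 ?expR_ge0.
rewrite /Znorm; set S := esum _ _.
case: S => [r||] /=; try by rewrite invr0 mul0e.
rewrite -EFinM lee_fin; have [->|r_neq0] := eqVneq r 0; first by rewrite mulr0.
by rewrite mulVf.
Qed.

Lemma heatmap_smooth (p : 'I_Delta * 'I_Delta -> R) :
  (fun a => (heatmap sigma p a)%:E) =
  smooth grid_embed gauss_kernel (fun x => (p x)%:E).
Proof.
apply: funext => a; rewrite -sumEFin.
by apply: eq_bigr => x _; rewrite EFinM.
Qed.

End gaussian_kernel.

Theorem lemma7 (R : realType) (Delta : nat) (hDelta : (0 < Delta)%N)
    (p q : 'I_Delta * 'I_Delta -> R)
    (hp : forall a, 0 <= p a) (hq : forall a, 0 <= q a)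
    (hmass : \sum_a p a = \sum_a q a)
    (sigma : R) (hsigma : 0 < sigma) :
  (EMD (@Zpos R Delta)
       (fun a => (heatmap sigma p a)%:E) (fun a => (heatmap sigma q a)%:E)
   <= EMD (@Gpos R Delta) (fun a => (p a)%:E) (fun a => (q a)%:E))%E.
Proof.
(* [Gpos Delta] is convertible to [fun x => Zpos Delta (grid_embed x)]. *)
rewrite !heatmap_smooth.
apply: EMD_smooth_le => [a b|a b d|a b d|b].
- exact: gauss_kernel_ge0.
- exact: gauss_kernelD.
- by rewrite !ZposD l1distDr.
- exact: esum_gauss_kernel_le1.
Qed.
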